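(* In the setting described in the context, for all sufficiently large $y$ (in terms of $E$, $\gamma$ and $\delta$), there exists a subset of $\mathbf{D}_{\mathbf{P}}$ which can be partitioned into $\frac{2^{\vert\mathbf{P}\vert}}{2M}$ sets of $M$ elements each, each of these sets having logarithmic spread greater than $1$.
   Context: For a finite set $\mathbf{S}$ of positive integers, $\mathbf{D}_{\mathbf{S}}=\{d: d\mid\prod_{s\in\mathbf{S}}s\}$, and the logarithmic spread of $\mathbf{S}$ is $\min_{s_1\neq s_2}\vert\log s_1-\log s_2\vert$ over $s_1,s_2\in\mathbf{S}$. $P^+(n)$ denotes the largest prime factor of $n$. Setting: fix $E>0$ and $\gamma>0$ such that $\#\{p\leq x: P^+(p-1)\leq x^{1-E}\}\geq\frac{\gamma x}{\log x}$ for all sufficiently large $x$. Fix $\delta>0$ and put $\Delta=\delta^2/24$. Fix positive constants $C_5,C_6$ and, for each positive integer $x$, an integer $s_x\in[\sqrt{\log x},e^{\sqrt{\log x}}]$ such that $\sum_{q\leq x^{2/5},\,s_x\nmid q}\max_{2\leq z\leq x}\max_{(a,q)=1}\vert\pi(z;q,a)-\pi(z)/\phi(q)\vert\leq C_5x e^{-C_6\sqrt{\log x}}$ for all $x$. Let $M$ be a fixed power of two depending only on $\delta$ (in the paper, the smallest power of two greater than the integer $N$ supplied, for $m=2$ and this $\Delta$, by the Maynard-type theorem: for any admissible set of $N$ linear forms $d_in+c_i$ with positive integer coefficients and $d_i>c_i$, at least $x/(\log x)^N$ integers $n\in[x,2x)$ make at least $m$ of the forms prime). Let $y$ be a large real parameter,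 $\Upsilon=\lceil e^{y^{2+2\Delta}}\rceil$, $\kappa=\prod_{y/\log y\leq p\leq y,\ P^+(p-1)\leq y^{1-E}}p^2$, and let $p^*$ be the largest prime factor of $s_{2\Upsilon\kappa}$. Finally $\mathbf{P}=\{p\text{ prime}: \frac{y}{\log y}\leq p\leq y,\ P^+(p-1)\leq y^{1-E},\ p\neq p^*\}$. *)

From HB Require Import structures.
From mathcomp Require Import all_boot all_order all_algebra.
From mathcomp Require Import all_classical all_reals all_analysis.
From mathcomp Require Import Rstruct.
Set Implicit Arguments. Unset Strict Implicit. Unset Printing Implicit Defensive.
Import Order.TTheory GRing.Theory Num.Theory.
Local Open Scope ring_scope.

Notation RR := Rdefinitions.R.

(* P^+(n): largest prime factor of n (max_pdiv n = 1 for n <= 1). *)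
Definition Pplus (n : nat) : nat := max_pdiv n.

Definition count_smooth_shift (E x : RR) : nat :=
  count (fun p => prime p && ((Pplus p.-1)%:R <= x `^ (1 - E)))
        (iota 0 `|Num.floor x|%N.+1).

Definition prime_pi (z : nat) : nat := count prime (iota 0 z.+1).
Definition prime_pi_ap (z q a : nat) : nat :=
  count (fun p => prime p && (p == a %[mod q])) (iota 0 z.+1).

Definition sw_err (x q : nat) : RR :=
  \big[Num.max/0]_(2 <= z < x.+1)
    \big[Num.max/0]_(a < q | coprime a q)
       `| (prime_pi_ap z q a)%:R - (prime_pi z)%:R / (totient q)%:R |.

Definition sw_sum (s : nat -> nat) (x : nat) : RR :=
  \sum_(1 <= q < x.+1 | ((q%:R : RR) <= (x%:R : RR) `^ (2 / 5)) && ~~ (s x %| q)%N) sw_err x q.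

Definition Delta (delta : RR) : RR := delta ^+ 2 / 24.

Definition Upsilon (delta y : RR) : nat :=
  `|Num.ceil (expR (y `^ (2 + 2 * Delta delta)))|%N.

Definition goodp (E y : RR) (p : nat) : bool :=
  [&& prime p, y / ln y <= p%:R, p%:R <= y & (Pplus p.-1)%:R <= y `^ (1 - E)].

Definition kappa (E y : RR) : nat :=
  \prod_(p <- iota 0 `|Num.floor y|%N.+1 | goodp E y p) p ^ 2.

Definition pstar (s : nat -> nat) (E delta y : RR) : nat :=
  Pplus (s (2 * Upsilon delta y * kappa E y)%N).

(* the set P, as a duplicate-free increasing list *)
Definition Pset (s : nat -> nat) (E delta y : RR) : seq nat :=
  [seq p <- iota 0 `|Num.floor y|%N.+1 | goodp E y p & p != pstar s E delta y].

Definition Dset (S : seq nat) : seq nat := divisors (\prod_(p <- S) p).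

Definition log_spread_gt (S : seq nat) (c : RR) : Prop :=
  forall s1 s2, s1 \in S -> s2 \in S -> s1 != s2 ->
    c < `| ln (s1%:R : RR) - ln (s2%:R : RR) |.

From HB Require Import structures.
From mathcomp Require Import all_boot all_order all_algebra.
From mathcomp Require Import all_classical all_reals all_analysis.
From mathcomp Require Import Rstruct.
From mathcomp Require Import ring lra zify.
Set Implicit Arguments. Unset Strict Implicit. Unset Printing Implicit Defensive.
Import Order.TTheory GRing.Theory Num.Theory.

(* Fix m with 'C(m, c) * 2 ^ k.+1 <= 2 ^ m for every c, which is possible because the
   central binomial coefficient is O(2 ^ m / sqrt m).  For large y the set P has at
   least m elements: the hypothesis gives gamma y / log y primes p <= y with
   P^+(p - 1) <= y ^ (1 - E), a Chebyshev bound leaves at most (gamma / 2) y / log y + O(1)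
   of them below y / log y, and excluding p* costs one more.  List the subsets of the
   first m primes of P by increasing cardinality; every cardinality class has at most
   G = 2 ^ (m - k.+1) members, so the subsets in positions g, g + G, ..., g + (M - 1) G
   have pairwise distinct cardinalities.  Multiplying their products by a common
   product of the remaining primes gives a group of M divisors of prod P, and there
   are 2 ^ |P| / (2 M) such groups.  All primes of P lie in [y / log y, y], so products
   over sets of different cardinalities differ in logarithm by more than
   log (y / log y) - m log log y > 1. *)

Lemma mul_bin_central_succ L : 'C(L.*2.+2, L.+1) * L.+1 = 2 * L.*2.+1 * 'C(L.*2, L).
Proof.
have diag := mul_bin_diag L.*2.+2 L.
have down := mul_bin_down L.*2.+1 L.
rewrite /= (_ : L.*2.+1 - L = L.+1) in diag down; last by rewrite -addnn; lia.
rewrite -addnn in diag down *; nia.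
Qed.

Lemma central_bin_sq_le L : 'C(L.*2, L) ^ 2 * L.*2.+1 <= 16 ^ L.
Proof.
elim: L => [|L IH]; first by rewrite bin0.
rewrite -(@leq_pmul2r (L.+1 ^ 2)) ?expn_gt0 // doubleS.
have -> : 'C(L.*2.+2, L.+1) ^ 2 * L.*2.+3 * L.+1 ^ 2
        = ('C(L.*2.+2, L.+1) * L.+1) ^ 2 * L.*2.+3 by rewrite expnMn; lia.
rewrite mul_bin_central_succ.
have step : 4 * L.*2.+1 * L.*2.+3 <= 16 * L.+1 ^ 2 by rewrite -addnn; nia.
set a := 'C(L.*2, L); have -> : (2 * L.*2.+1 * a) ^ 2 * L.*2.+3
    = (a ^ 2 * L.*2.+1) * (4 * L.*2.+1 * L.*2.+3) by ring.
by rewrite (expnS 16) (mulnC 16) -[X in _ <= X]mulnA; apply: leq_mul.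
Qed.

Lemma leq_bin_succ n c : c.*2 < n -> 'C(n, c) <= 'C(n, c.+1).
Proof.
move=> lt_cn; rewrite -(@leq_pmul2l c.+1) // [X in _ <= X]mul_bin_left.
by rewrite leq_mul2r; apply/orP; right; rewrite -addnn in lt_cn; lia.
Qed.

Lemma leq_bin_central L c : 'C(L.*2, c) <= 'C(L.*2, L).
Proof.
have below d : d <= L -> 'C(L.*2, L - d) <= 'C(L.*2, L).
  elim: d => [|d IH] ltdL; first by rewrite subn0.
  apply: leq_trans (IH (ltnW ltdL)).
  rewrite (_ : L - d = (L - d.+1).+1); last by lia.
  by apply: leq_bin_succ; rewrite -addnn; lia.
have [leLc|ltcL] := leqP c L; first by rewrite -(subKn leLc) below ?leq_subr.
have [le2c|lt2c] := leqP c L.*2; last by rewrite bin_small.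
rewrite -bin_sub // (_ : L.*2 - c = L - (c - L)); last by rewrite -addnn in le2c *; lia.
by apply: below; rewrite -addnn in le2c; lia.
Qed.

Lemma exists_bin_mul_exp_le k : exists m, forall c, 'C(m, c) * 2 ^ k <= 2 ^ m.
Proof.
exists (4 ^ k).*2 => c; rewrite -(@leq_exp2r _ _ 2) // expnMn.
have -> : (2 ^ k) ^ 2 = 4 ^ k by rewrite -expnM mulnC expnM.
have -> : (2 ^ (4 ^ k).*2) ^ 2 = 16 ^ 4 ^ k by rewrite -expnM -muln2 -mulnA mulnC expnM.
apply: leq_trans (central_bin_sq_le (4 ^ k)).
rewrite leq_mul ?leq_exp2r ?leq_bin_central //.
by have := ltn_expl k (isT : 1 < 4); rewrite -addnn; lia.
Qed.

Lemma card_set_type (T : finType) : #|{set T}| = 2 ^ #|T|.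
Proof. by have := card_powerset [set: T]; rewrite powersetT !cardsT. Qed.

Lemma bin_le_exp2 n k : 'C(n, k) <= 2 ^ n.
Proof. by rewrite -{1 2}(card_ord n) -card_draws -card_set_type max_card. Qed.

Lemma prime_dvd_fact_le p n : prime p -> p %| n`! -> p <= n.
Proof.
move=> p_pr; elim: n => [|n IH]; first by rewrite dvdn1 => /eqP p1; rewrite p1 in p_pr.
by rewrite factS Euclid_dvdM // => /orP [/(dvdn_leq (ltn0Sn n)) | /IH /leqW].
Qed.

Lemma prime_dvd_central_bin h p : prime p -> h < p <= h.*2 -> p %| 'C(h.*2, h).
Proof.
move=> p_pr /andP [lt_hp le_p2h].
have : p %| h.*2`! by rewrite dvdn_fact // prime_gt0.
rewrite -addnn -(bin_fact (leq_addr h h)) addnK !Euclid_dvdM //.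
by case/orP=> // /orP [] /(prime_dvd_fact_le p_pr); rewrite leqNgt lt_hp.
Qed.

Lemma prod_primes_dvd (s : seq nat) n :
  uniq s -> all prime s -> all (dvdn^~ n) s -> \prod_(p <- s) p %| n.
Proof.
elim: s => [|p s IH] /=; first by rewrite big_nil dvd1n.
case/andP=> p_s s_uniq /andP [p_pr s_pr] /andP [p_n s_n].
rewrite big_cons Gauss_dvd ?p_n ?IH // prime_coprime // Euclid_dvd_prod // big_has.
apply/hasPn => q q_s; rewrite dvdn_prime2 ?(allP s_pr q q_s) //.
by apply: contraNneq p_s => ->.
Qed.

Lemma exp_size_le_prod (s : seq nat) h : all (leq h) s -> h ^ size s <= \prod_(p <- s) p.
Proof.
elim: s => [|p s IH] /=; first by rewrite big_nil.
by case/andP=> le_hp /IH; rewrite big_cons expnS; apply: leq_mul.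
Qed.

Lemma exp_count_primes_le h : h ^ count prime (iota h.+1 h) <= 4 ^ h.
Proof.
set t := [seq p <- iota h.+1 h | prime p].
have t_prime : all prime t := filter_all prime _.
have t_range : all (fun p => h < p <= h.*2) t.
  by apply/allP => p; rewrite mem_filter mem_iota -addnn; lia.
have t_ge : all (leq h) t by apply/allP => p /(allP t_range) /andP [/ltnW].
rewrite -size_filter -/t; apply: leq_trans (exp_size_le_prod t_ge) _.
apply: leq_trans (_ : 'C(h.*2, h) <= _).
  apply: dvdn_leq; first by rewrite bin_gt0 -addnn leq_addr.
  rewrite prod_primes_dvd ?filter_uniq ?iota_uniq //.
  by apply/allP => p p_t; rewrite prime_dvd_central_bin ?(allP t_prime) ?(allP t_range).
by rewrite (_ : 4 ^ h = 2 ^ h.*2) ?bin_le_exp2 // -muln2 mulnC expnM.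
Qed.

Lemma mul_count_primes_lt r h : 4 ^ r < h -> r * count prime (iota h.+1 h) < h.
Proof.
set c := count _ _ => lt_4r_h; rewrite ltnNge; apply/negP => le_h_rc.
have h_gt0 : 0 < h by apply: leq_ltn_trans lt_4r_h.
have r_gt0 : 0 < r by case: r le_h_rc lt_4r_h => //; lia.
have : h ^ h <= (4 ^ r) ^ h.
  apply: leq_trans (leq_pexp2l h_gt0 le_h_rc) _.
  have -> : (4 ^ r) ^ h = (4 ^ h) ^ r by rewrite -!expnM mulnC.
  by rewrite mulnC expnM leq_exp2r // exp_count_primes_le.
by rewrite leqNgt ltn_exp2r ?lt_4r_h.
Qed.

Lemma prime_pi_mul_le r N : r * prime_pi N <= r * (4 ^ r).*2.+3 + N.*2.
Proof.
rewrite /prime_pi; elim/ltn_ind: N => N IH.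
have [small|large] := leqP N (4 ^ r).*2.+2.
  apply: leq_trans (leq_addr _ _); rewrite leq_mul2l.
  by rewrite (leq_trans (count_size _ _)) ?orbT // size_iota.
set h := N./2; have N_eq : N = h.*2 + odd N by rewrite addnC odd_double_half.
have odd_le1 := leq_b1 (odd N).
have lt_4r_h : 4 ^ r < h by move: large; rewrite {1}N_eq -!addnn; lia.
have lt_r_4r : r < 4 ^ r by apply: ltn_expl.
have split_count : count prime (iota 0 N.+1)
    <= count prime (iota 0 h.+1) + count prime (iota h.+1 h) + 1.
  rewrite {1}N_eq (_ : (h.*2 + odd N).+1 = h.+1 + h + odd N); last by rewrite -addnn; lia.
  rewrite !iotaD !count_cat add0n leq_add2l.
  by rewrite (leq_trans (count_size _ _)) // size_iota.
have lt_hN : h < N by move: N_eq lt_4r_h; rewrite -addnn; lia.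
have IHh := IH h lt_hN; have rc_lt := mul_count_primes_lt lt_4r_h.
apply: leq_trans (leq_mul (leqnn r) split_count) _.
move: IHh rc_lt N_eq lt_4r_h lt_r_4r; rewrite -!addnn; lia.
Qed.

Section SubsetsByCard.
Variable T : finType.

Definition subsets_by_card : seq {set T} :=
  sort (fun A B : {set T} => #|A| <= #|B|) (enum {set T}).

Lemma size_subsets_by_card : size subsets_by_card = 2 ^ #|T|.
Proof. by rewrite size_sort -cardT card_set_type. Qed.

Lemma uniq_subsets_by_card : uniq subsets_by_card.
Proof. by rewrite sort_uniq enum_uniq. Qed.

Lemma count_card_subsets_by_card c :
  count (fun A : {set T} => #|A| == c) subsets_by_card = 'C(#|T|, c).
Proof.
rewrite (permP (permEl (perm_sort _ _))) -card_draws cardE /enum_mem size_filter.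
by rewrite count_filter; apply: eq_count => A; rewrite !inE andbT.
Qed.

Lemma card_subsets_by_card_mono p q : p <= q < 2 ^ #|T| ->
  #|nth finset.set0 subsets_by_card p| <= #|nth finset.set0 subsets_by_card q|.
Proof.
case/andP=> le_pq lt_q.
have sorted_s : sorted (fun A B : {set T} => #|A| <= #|B|) subsets_by_card.
  by apply: sort_sorted => A B; exact: leq_total.
apply: (sorted_leq_nth _ _ finset.set0 sorted_s) => //.
- by move=> B A C; exact: leq_trans.
- by rewrite inE size_subsets_by_card (leq_ltn_trans le_pq).
- by rewrite inE size_subsets_by_card.
Qed.

Lemma card_subsets_by_card_gap p q : p < q < 2 ^ #|T| ->
  #|nth finset.set0 subsets_by_card p| = #|nth finset.set0 subsets_by_card q| ->
  q - p < 'C(#|T|, #|nth finset.set0 subsets_by_card p|).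
Proof.
case/andP=> lt_pq lt_q eq_card; set s := subsets_by_card; set c := #|nth finset.set0 s p|.
set mid := take (q - p).+1 (drop p s).
have size_mid : size mid = (q - p).+1.
  by rewrite size_take size_drop size_subsets_by_card; case: ifP => //; lia.
have mid_c : all (fun A : {set T} => #|A| == c) mid.
  apply/(all_nthP finset.set0) => i; rewrite size_mid => lt_i.
  rewrite nth_take // nth_drop eqn_leq; apply/andP; split.
    by rewrite /c eq_card card_subsets_by_card_mono //; lia.
  by rewrite card_subsets_by_card_mono //; lia.
rewrite -count_card_subsets_by_card -/s -(cat_take_drop p s) count_cat.
rewrite -(cat_take_drop (q - p).+1 (drop p s)) count_cat -/mid.
by move: mid_c; rewrite all_count size_mid => /eqP ->; lia.
Qed.

End SubsetsByCard.

Section CardBlocks.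
Variables (T : finType) (G M : nat).
Hypotheses (GM_le : G * M <= 2 ^ #|T|) (bin_le : forall c, 'C(#|T|, c) <= G).

Definition block_subset (g j : nat) : {set T} := nth finset.set0 (subsets_by_card T) (g + j * G).

Lemma block_index_lt g j : g < G -> j < M -> g + j * G < 2 ^ #|T|.
Proof.
move=> lt_g lt_j; apply: leq_trans _ GM_le; apply: (@leq_trans (j.+1 * G)).
  by rewrite mulSn ltn_add2r.
by rewrite (mulnC G) leq_mul2r lt_j orbT.
Qed.

Lemma block_subset_inj g j g' j' : g < G -> j < M -> g' < G -> j' < M ->
  block_subset g j = block_subset g' j' -> g = g' /\ j = j'.
Proof.
move=> lt_g lt_j lt_g' lt_j' /eqP.
rewrite /block_subset nth_uniq ?size_subsets_by_card ?block_index_lt ?uniq_subsets_by_card //.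
move/eqP=> eq_idx; have eq_g : g = g'.
  by move: (congr1 (modn^~ G) eq_idx); rewrite !(addnC _ (_ * G)) !modnMDl !modn_small.
split=> //; move: eq_idx; rewrite eq_g => /addnI /eqP.
by rewrite eqn_mul2r (gtn_eqF (leq_ltn_trans (leq0n g) lt_g)) => /eqP.
Qed.

Lemma card_block_subset_inj g j j' : g < G -> j < M -> j' < M ->
  #|block_subset g j| = #|block_subset g j'| -> j = j'.
Proof.
move=> lt_g; wlog lt_jj' : j j' / j < j'.
  move=> gen lt_j lt_j' eq_card; case: (ltngtP j j') => [lt|lt|//].
  - exact: gen.
  - by apply/esym/gen.
move=> lt_j lt_j' eq_card; have := @card_subsets_by_card_gap T (g + j * G) (g + j' * G).
rewrite ltn_add2l ltn_mul2r lt_jj' block_index_lt // (leq_ltn_trans (leq0n g) lt_g).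
move=> /(_ isT eq_card) /leq_trans /(_ (bin_le _)).
have : j.+1 * G <= j' * G by rewrite leq_mul2r lt_jj' orbT.
by rewrite mulSn; lia.
Qed.

End CardBlocks.

Lemma prime_dvd_prod_set (I : finType) (F : I -> nat) (A : {set I}) q :
  prime q -> (forall i, prime (F i)) ->
  q %| \prod_(i in A) F i -> exists2 i, i \in A & q = F i.
Proof.
move=> q_pr F_pr; rewrite Euclid_dvd_prod // big_has_cond => /hasP [i _ /andP [i_A]].
by rewrite dvdn_prime2 // => /eqP q_F; exists i.
Qed.

Lemma dvdn_prod_set (I : finType) (F : I -> nat) (A : {set I}) i :
  i \in A -> F i %| \prod_(i in A) F i.
Proof. by move=> i_A; rewrite (bigD1 i) //= dvdn_mulr. Qed.

Lemma prod_prime_sets_subset (I J : finType) (F : I -> nat) (H : J -> nat)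
    (S S' : {set I}) (T T' : {set J}) :
  (forall i, prime (F i)) -> (forall j, prime (H j)) -> injective F ->
  (forall i j, F i != H j) ->
  \prod_(i in S) F i * \prod_(j in T) H j = \prod_(i in S') F i * \prod_(j in T') H j ->
  S \subset S'.
Proof.
move=> F_pr H_pr F_inj FH_neq eq_prod; apply/fintype.subsetP => i i_S.
have : F i %| \prod_(i in S') F i * \prod_(j in T') H j.
  by rewrite -eq_prod dvdn_mulr // dvdn_prod_set.
rewrite Euclid_dvdM // => /orP [/(prime_dvd_prod_set (F_pr i) F_pr) | ].
  by case=> i' i'_S' /F_inj ->.
by case/(prime_dvd_prod_set (F_pr i) H_pr) => j _ eq_FH; move: (FH_neq i j); rewrite eq_FH eqxx.
Qed.

Lemma prod_prime_sets_inj (I J : finType) (F : I -> nat) (H : J -> nat)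
    (S S' : {set I}) (T T' : {set J}) :
  (forall i, prime (F i)) -> (forall j, prime (H j)) -> injective F -> injective H ->
  (forall i j, F i != H j) ->
  \prod_(i in S) F i * \prod_(j in T) H j = \prod_(i in S') F i * \prod_(j in T') H j ->
  S = S' /\ T = T'.
Proof.
move=> F_pr H_pr F_inj H_inj FH_neq eq_prod.
have HF_neq j i : H j != F i by rewrite eq_sym.
have eq_prod' := eq_prod; rewrite mulnC [RHS]mulnC in eq_prod'.
split; apply/eqP; rewrite finset.eqEsubset.
  by rewrite (prod_prime_sets_subset F_pr H_pr F_inj FH_neq eq_prod)
             (prod_prime_sets_subset F_pr H_pr F_inj FH_neq (esym eq_prod)).
by rewrite (prod_prime_sets_subset H_pr F_pr H_inj HF_neq eq_prod')
           (prod_prime_sets_subset H_pr F_pr H_inj HF_neq (esym eq_prod')).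
Qed.

Section SumGap.
Local Open Scope ring_scope.
Variables (R : realFieldType) (I : finType) (u : I -> R) (lo hi : R).
Hypothesis u_range : forall i, lo <= u i <= hi.

Lemma sum_set_bounds (A : {set I}) :
  lo * #|A|%:R <= \sum_(i in A) u i <= hi * #|A|%:R.
Proof.
by rewrite !mulr_natr -!sumr_const; apply/andP; split; apply: ler_sum => i _;
  case/andP: (u_range i).
Qed.

Lemma sum_set_gap_gt d (S S' : {set I}) :
  0 <= d -> d < lo - #|I|%:R * (hi - lo) -> #|S| != #|S'| ->
  d < `|\sum_(i in S) u i - \sum_(i in S') u i|.
Proof.
move=> d_ge0 d_lt; wlog lt_card : S S' / (#|S' :\: S| < #|S :\: S'|)%N.
  move=> gen neq; case: (ltngtP #|S' :\: S| #|S :\: S'|) => [lt|lt|eq].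
  - exact: gen.
  - by rewrite distrC; apply: gen; rewrite // eq_sym.
  - by move: neq; rewrite -(cardsID S' S) -(cardsID S S') finset.setIC eq eqxx.
move=> _; rewrite (big_setID S') [X in _ - X](big_setID S) /= finset.setIC.
rewrite opprD addrACA subrr add0r.
have [lo_a _] := andP (sum_set_bounds (S :\: S')).
have [_ hi_b] := andP (sum_set_bounds (S' :\: S)).
have [i i_S] : exists i, i \in S :\: S' by apply/card_gt0P; apply: leq_ltn_trans lt_card.
have [lo_i i_hi] := andP (u_range i).
have le_b : (#|S' :\: S| <= #|I|)%N := max_card _.
move: lt_card le_b lo_a hi_b; set a := #|S :\: S'|; set b := #|S' :\: S|.
rewrite -(ler_nat R) -natr1 -(ler_nat R) => lt_ba le_bI lo_a hi_b.
have lo_ge0 : 0 <= lo by have := ler0n R #|I|; nra.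
apply: lt_le_trans (ler_norm _).
have : 0 <= (#|I|%:R - b%:R) * (hi - lo) by apply: mulr_ge0; lra.
have : 0 <= (a%:R - b%:R - 1) * lo by apply: mulr_ge0; lra.
lra.
Qed.

End SumGap.

Lemma ln_prod (R : realType) (I : finType) (A : {set I}) (F : I -> R) :
  (forall i, 0 < F i)%R -> ln (\prod_(i in A) F i) = (\sum_(i in A) ln (F i))%R.
Proof.
move=> F_gt0; apply: proj2 (_ : 0 < \prod_(i in A) F i /\ _)%R.
apply: (big_rec2 (fun x s => 0 < x /\ ln x = s)%R) => [|i x s _ [x_gt0 <-]].
  by rewrite ln1.
by rewrite mulr_gt0 // lnM ?posrE.
Qed.

Lemma dvdn_prod_subset (I : finType) (A : {set I}) (F : I -> nat) :
  \prod_(i in A) F i %| \prod_i F i.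
Proof. by rewrite [X in _ %| X](bigID (mem A)) /= dvdn_mulr. Qed.

Section DivisorBlocks.
Variables (P : seq nat) (k m : nat).
Hypotheses (P_uniq : uniq P) (P_prime : all prime P) (m_le : m <= size P).
Hypothesis bin_le : forall c, 'C(m, c) * 2 ^ k.+1 <= 2 ^ m.

Definition low_prime (a : 'I_m) := nth 0 P a.
Definition high_prime (b : 'I_(size P - m)) := nth 0 P (m + b).

Let G := 2 ^ (m - k.+1).

(* The index i encodes a subset (i %/ G) of the primes beyond the first m and a
   group (i %% G) of block_subset. *)
Definition divisor_block (i : 'I_(2 ^ size P %/ (2 * 2 ^ k))) (j : 'I_(2 ^ k)) : nat :=
  \prod_(a in block_subset 'I_m G (i %% G) j) low_prime a *
  \prod_(b in nth finset.set0 (enum {set 'I_(size P - m)}) (i %/ G)) high_prime b.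

Let lt_k_m : k < m.
Proof. by have := bin_le 0; rewrite bin0 mul1n leq_exp2l. Qed.

Lemma dvdn_exp_size : 2 * 2 ^ k %| 2 ^ size P.
Proof. by rewrite -expnS dvdn_exp2l // (leq_trans lt_k_m). Qed.

Let block_count : 2 ^ size P %/ (2 * 2 ^ k) = 2 ^ (size P - m) * G.
Proof.
rewrite -expnS {1}(_ : size P = size P - m + (m - k.+1) + k.+1); last by lia.
by rewrite expnD mulnK ?expn_gt0 // expnD.
Qed.

Let P_nth_prime a : a < size P -> prime (nth 0 P a).
Proof. by move=> lt_a; apply: (allP P_prime); rewrite mem_nth. Qed.

Let lt_low (a : 'I_m) : a < size P.
Proof. exact: leq_trans (ltn_ord a) m_le. Qed.

Let lt_high (b : 'I_(size P - m)) : m + b < size P.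
Proof. by rewrite -ltn_subRL. Qed.

Let G_gt0 : 0 < G.
Proof. by rewrite expn_gt0. Qed.

Let GM_le : G * 2 ^ k <= 2 ^ #|'I_m|.
Proof. by rewrite card_ord -expnD leq_exp2l //; lia. Qed.

Let bin_le_G c : 'C(#|'I_m|, c) <= G.
Proof. by rewrite card_ord -(leq_pmul2r (expn_gt0 2 k.+1)) -expnD subnK. Qed.

Let lt_hi (i : 'I_(2 ^ size P %/ (2 * 2 ^ k))) : i %/ G < 2 ^ (size P - m).
Proof. by rewrite ltn_divLR // -block_count. Qed.

Let low_prime_prime a : prime (low_prime a).
Proof. exact: P_nth_prime. Qed.

Let high_prime_prime b : prime (high_prime b).
Proof. exact: P_nth_prime. Qed.

Lemma divisor_block_inj i j i' j' :
  divisor_block i j = divisor_block i' j' -> i = i' /\ j = j'.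
Proof.
case/prod_prime_sets_inj.
- exact: low_prime_prime.
- exact: high_prime_prime.
- by move=> a a' /eqP; rewrite nth_uniq // => /eqP /val_inj.
- by move=> b b' /eqP; rewrite nth_uniq // eqn_add2l => /eqP /val_inj.
- by move=> a b; rewrite nth_uniq // neq_ltn ltn_addr.
move=> /(block_subset_inj GM_le) [//||||eq_mod eq_j]; rewrite ?ltn_pmod //.
move=> /eqP; rewrite nth_uniq ?enum_uniq -?cardT ?card_set_type ?card_ord // => /eqP eq_div.
split; apply: val_inj => //=.
by rewrite (divn_eq i G) (divn_eq i' G) eq_div eq_mod.
Qed.

Lemma divisor_block_in_Dset i j : divisor_block i j \in Dset P.
Proof.
rewrite /Dset; have -> : \prod_(p <- P) p = \prod_a low_prime a * \prod_b high_prime b.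
  rewrite (big_nth 0) (big_cat_nat (leq0n m) m_le) /= big_mkord; congr (_ * _).
  rewrite -{1}(add0n m) big_addn big_mkord; apply: eq_bigr => b _.
  by rewrite /high_prime addnC.
rewrite -dvdn_divisors ?muln_gt0 ?prodn_gt0 => [||b|a]; rewrite ?prime_gt0 //.
by rewrite dvdn_mul ?dvdn_prod_subset.
Qed.

Local Open Scope ring_scope.

Lemma log_spread_divisor_block (z y : RR) i :
  0 < z -> (forall p, p \in P -> z <= p%:R <= y) -> 1 < ln z - m%:R * (ln y - ln z) ->
  log_spread_gt [seq divisor_block i j | j <- enum 'I_(2 ^ k)] 1.
Proof.
move=> z_gt0 P_range gap _ _ /mapP [j _ ->] /mapP [j' _ ->] neq.
have neq_card : #|block_subset 'I_m G (i %% G) j| != #|block_subset 'I_m G (i %% G) j'|.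
  apply: contra neq => /eqP /(card_block_subset_inj GM_le bin_le_G).
  by rewrite ltn_pmod // => /(_ isT (ltn_ord j) (ltn_ord j')) /val_inj ->.
have low_gt0 a : 0 < (low_prime a)%:R :> RR by rewrite ltr0n prime_gt0.
rewrite /divisor_block !natrM !lnM ?posrE ?ltr0n ?prodn_gt0 // => [|a|b|a|b];
  rewrite ?prime_gt0 //.
rewrite opprD addrACA subrr addr0 !natr_prod !ln_prod //.
apply: (sum_set_gap_gt (lo := ln z) (hi := ln y)); rewrite ?card_ord // => a.
have /P_range z_y : low_prime a \in P by apply: mem_nth.
rewrite !ler_ln ?posrE //; case/andP: z_y => _; exact: lt_le_trans.
Qed.

End DivisorBlocks.

Local Open Scope ring_scope.

Lemma prime_pi_le_eps (R : archiRealFieldType) (eps : R) : 0 < eps ->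
  exists B : R, forall N, (prime_pi N)%:R <= B + eps * N%:R.
Proof.
move=> eps_gt0; set r := Num.bound (2 / eps).
have lt_r : 2 / eps < r%:R by apply: archi_boundP; rewrite divr_ge0 // ltW.
have r_gt0 : 0 < r%:R :> R by apply: le_lt_trans lt_r; rewrite divr_ge0 // ltW.
have two_lt : 2 < r%:R * eps by rewrite -ltr_pdivrMr.
exists ((4 ^ r).*2.+3)%:R => N; have := prime_pi_mul_le r N.
rewrite -(ler_nat R) natrD !natrM -[N.*2]muln2 natrM => le_pi.
by rewrite -(ler_pM2l r_gt0); have := ler0n R N; nra.
Qed.

Lemma ln_lt_div (R : realType) (K v : R) :
  0 < K -> 0 < v -> 2 * K * ln (2 * K) <= v -> ln v < v / K.
Proof.
move=> K_gt0 v_gt0 le_v; have K2_gt0 : 0 < 2 * K by rewrite mulr_gt0.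
have -> : ln v = ln (v / (2 * K)) + ln (2 * K).
  by rewrite -lnM ?posrE ?divr_gt0 // divfK // gt_eqF.
have := ln_sublinear (divr_gt0 v_gt0 K2_gt0).
have : ln (2 * K) <= v / (2 * K) by rewrite ler_pdivlMr // mulrC.
have -> : v / K = v / (2 * K) + v / (2 * K) by field; rewrite gt_eqF.
lra.
Qed.

Lemma div_ln_eventually_gt (R : realType) (c : R) : 0 < c ->
  exists y0, forall y, y0 <= y -> [/\ 0 < y, 1 <= ln y & c < y / ln y].
Proof.
move=> c_gt0; exists (Num.max (expR 1) (2 * c * ln (2 * c))) => y.
rewrite ge_max => /andP [e_le_y le_y]; have y_gt0 := lt_le_trans (expR_gt0 1) e_le_y.
have ln_ge1 : 1 <= ln y by rewrite -ler_expR lnK ?posrE.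
split=> //; rewrite ltr_pdivlMr ?(lt_le_trans ltr01 ln_ge1) // mulrC -ltr_pdivlMr //.
exact: ln_lt_div.
Qed.

Lemma ln_gap_eventually (R : realType) (m : nat) : exists y0 : R, forall y, y0 <= y ->
  0 < y / ln y /\ 1 < ln (y / ln y) - m%:R * (ln y - ln (y / ln y)).
Proof.
have [v0 large] := div_ln_eventually_gt (ltr0Sn R m.+1).
exists (expR v0) => y le_y; have y_gt0 := lt_le_trans (expR_gt0 v0) le_y.
have v_ge : v0 <= ln y by rewrite -(expRK v0) ler_ln ?posrE ?expR_gt0.
have [v_gt0 lnv_ge1] := large _ v_ge.
rewrite ltr_pdivlMr ?(lt_le_trans ltr01 lnv_ge1) // => lt_v.
rewrite divr_gt0 // ln_div ?posrE //; split=> //.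
by rewrite -natr1 in lt_v; lra.
Qed.

Lemma leq_abs_floor (R : archiRealDomainType) (x : R) (p : nat) : 0 <= x ->
  (p <= `|Num.floor x|%N)%N = (p%:R <= x).
Proof.
by move=> x_ge0; rewrite -(floor_ge_int x p) -lez_nat gez0_abs // floor_ge0.
Qed.

Lemma count_le_addn_in (T : eqType) (s : seq T) (a b c : pred T) :
  {in s, forall x, a x -> b x || c x} -> (count a s <= count b s + count c s)%N.
Proof.
elim: s => //= x s IH abc; rewrite addnACA; apply: leq_add.
  by have := abc x (mem_head x s); case: (a x) (b x) (c x) => [] [] [] // /(_ isT).
by apply: IH => y y_s; apply: abc; rewrite inE y_s orbT.
Qed.

Lemma mem_Pset s E delta y p : p \in Pset s E delta y ->
  [/\ prime p, y / ln y <= p%:R & p%:R <= y].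
Proof. by rewrite mem_filter => /andP [/andP [/and4P [] ]]. Qed.

Lemma count_smooth_shift_le_Pset s E delta y : 0 <= y -> 0 < ln y ->
  (count_smooth_shift E y
     <= size (Pset s E delta y) + (1 + prime_pi `|Num.floor (y / ln y)|%N))%N.
Proof.
move=> y_ge0 ln_gt0; have z_ge0 : 0 <= y / ln y by rewrite divr_ge0 // ltW.
set Z := `|Num.floor (y / ln y)|%N; set ps := pstar s E delta y.
pose primeZ p := prime p && (p <= Z)%N.
rewrite /count_smooth_shift /Pset size_filter.
apply: leq_trans (count_le_addn_in (b := fun p => goodp E y p && (p != ps))
                    (c := predU (pred1 ps) primeZ) _) _.
  move=> p; rewrite mem_iota add0n ltnS leq_abs_floor // => /andP [_ le_py] /andP [p_pr smooth].
  have [le_zp|lt_pz] := leP (y / ln y) p%:R.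
    by rewrite /goodp p_pr le_zp le_py smooth /=; case: eqP.
  by rewrite /= /primeZ p_pr leq_abs_floor // (ltW lt_pz) !orbT.
rewrite leq_add2l; apply: leq_trans (count_le_addn_in (b := pred1 ps) (c := primeZ) _) _ => //.
rewrite leq_add ?count_uniq_mem ?iota_uniq ?leq_b1 //.
rewrite /prime_pi -!size_filter uniq_leq_size ?filter_uniq ?iota_uniq // => p.
by rewrite !mem_filter !mem_iota /= => /andP [/andP [-> le_pZ] _]; rewrite ltnS le_pZ.
Qed.

Lemma size_Pset_eventually_ge (E gamma delta : RR) (m : nat) : 0 < gamma ->
  (exists X0 : RR, forall x, X0 <= x -> gamma * x / ln x <= (count_smooth_shift E x)%:R) ->
  exists y0, forall y, y0 <= y -> forall s, (m <= size (Pset s E delta y))%N.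
Proof.
move=> gamma_gt0 [X0 smooth].
have [B pi_le] := prime_pi_le_eps (divr_gt0 gamma_gt0 (ltr0Sn RR 1)).
have B_ge0 : 0 <= B by have := pi_le 0%N; rewrite mulr0 addr0.
have c_gt0 : 0 < 2 * (m%:R + 1 + B) / gamma.
  by rewrite divr_gt0 // mulr_gt0 // ltr_wpDr // ltr_wpDl.
have [y1 large] := div_ln_eventually_gt c_gt0.
exists (Num.max X0 y1) => y; rewrite ge_max => /andP [/smooth cs_ge /large [y_gt0 ln_ge1 c_lt]] s.
have ln_gt0 := lt_le_trans ltr01 ln_ge1.
have cs_le := count_smooth_shift_le_Pset s E delta (ltW y_gt0) ln_gt0.
rewrite -(ler_nat RR) [(size _ + _)%:R]natrD [(1 + _)%:R]natrD in cs_le.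
rewrite -mulrA in cs_ge; rewrite ltr_pdivrMr // in c_lt.
set Z := `|Num.floor (y / ln y)|%N.
have Z_le : Z%:R <= y / ln y by rewrite -leq_abs_floor ?divr_ge0 ?ltW.
have : gamma / 2 * Z%:R <= gamma / 2 * (y / ln y).
  by apply: ler_wpM2l => //; rewrite divr_ge0 ?ltW.
have pi_Z := pi_le Z; clear smooth large pi_le.
move: cs_ge cs_le c_lt pi_Z; rewrite -ltnS -(ltr_nat RR) -natr1.
move: (y / ln y) (count_smooth_shift E y)%:R (prime_pi Z)%:R => z cs pi_Z.
clearbody Z; lra.
Qed.

Theorem lemma2 (E gamma : RR) (hE : 0 < E) (hgamma : 0 < gamma)
  (hsmooth : exists X0 : RR, forall x : RR, X0 <= x ->
      gamma * x / ln x <= (count_smooth_shift E x)%:R)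
  (delta : RR) (hdelta : 0 < delta) (k : nat) :
  let M := (2 ^ k)%N in
  exists y0 : RR,
  forall (C5 C6 : RR) (s : nat -> nat),
    0 < C5 -> 0 < C6 ->
    (forall x : nat, (0 < x)%N ->
       Num.sqrt (ln (x%:R : RR)) <= (s x)%:R <= expR (Num.sqrt (ln (x%:R : RR)))) ->
    (forall x : nat, (0 < x)%N ->
       sw_sum s x <= C5 * x%:R * expR (- (C6 * Num.sqrt (ln (x%:R : RR))))) ->
  forall y : RR, y0 <= y ->
    let P := Pset s E delta y in
    let K := (2 ^ size P %/ (2 * M))%N in
    (2 * M %| 2 ^ size P)%N /\
    exists f : 'I_K -> 'I_M -> nat,
      (forall i j i' j', f i j = f i' j' -> i = i' /\ j = j') /\
      (forall i j, f i j \in Dset P) /\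
      (forall i, log_spread_gt [seq f i j | j <- enum 'I_M] 1).
Proof.
move=> M; have [m bin_le] := exists_bin_mul_exp_le k.+1.
have [y1 size_ge] := size_Pset_eventually_ge delta m hgamma hsmooth.
have [y2 gap] := ln_gap_eventually RR m.
exists (Num.max y1 y2) => C5 C6 s _ _ _ _ y.
rewrite ge_max => /andP [/size_ge/(_ s) m_le /gap [z_gt0 gap_y]] P K.
have P_uniq : uniq P by rewrite filter_uniq ?iota_uniq.
have P_prime : all prime P by apply/allP => p /mem_Pset [].
split; first exact: dvdn_exp_size m_le bin_le.
exists (@divisor_block P k m); split; first exact: divisor_block_inj P_uniq P_prime m_le bin_le.
split; first by move=> i j; apply: (divisor_block_in_Dset P_prime m_le).
move=> i; apply: (log_spread_divisor_block P_uniq P_prime m_le bin_le z_gt0 _ gap_y).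
by move=> p /mem_Pset [_ -> ->].
Qed.
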